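(* Suppose $\mathrm{char}(k)\ne2$ ($k$ algebraically closed). The set $\mathscr{X}_2$ of isogeny classes of non-degenerate quadratic spaces of countable dimension has exactly one element.
   Context: A quadratic space is a $k$-vector space $V$ together with $q\in P_2(V)$, a degree-$2$ polynomial function on $V$ (in dual coordinates to a basis, a formal, possibly infinite, $k$-linear combination of degree-$2$ monomials). The strength of $q$ is the least $s$ with $q=\sum_{i=1}^s g_ih_i$ for linear forms $g_i,h_i$ ($\infty$ if none exists); $(V,q)$ is non-degenerate if $q$ has infinite strength. An embedding $(W,q')\to(V,q)$ is a $k$-linear map $\phi:W\to V$ with $q\circ\phi=q'$; two quadratic spaces are isogenous if each embeds into the other. *)

From HB Require Import structures.
From mathcomp Require Import all_boot all_order all_algebra.
Set Implicit Arguments. Unset Strict Implicit. Unset Printing Implicit Defensive.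
Import GRing.Theory.
Local Open Scope ring_scope.

Section QuadSpaces.
Variable k : fieldType.

Definition klinear (U W : lmodType k) (f : U -> W) : Prop :=
  forall (a : k) (u v : U), f (a *: u + v) = a *: f u + f v.

Definition linear_form (V : lmodType k) (f : V -> k) : Prop :=
  forall (a : k) (u v : V), f (a *: u + v) = a * f u + f v.

(* q is a degree-2 (homogeneous) polynomial function on V, i.e. a quadratic
   form: q(a v) = a^2 q(v) and the polar form q(u+v)-q(u)-q(v) is bilinear. *)
Definition polar (V : lmodType k) (q : V -> k) (u v : V) : k :=
  q (u + v) - q u - q v.

Definition is_quadratic (V : lmodType k) (q : V -> k) : Prop :=
  (forall (a : k) (v : V), q (a *: v) = a ^+ 2 * q v) /\
  (forall (a : k) (u w v : V),
      polar q (a *: u + w) v = a * polar q u v + polar q w v).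

Definition spanning (V : lmodType k) (I : Type) (e : I -> V) : Prop :=
  forall v : V, exists (s : seq I) (c : I -> k),
    v = \sum_(i <- s) c i *: e i.

Definition lin_indep (V : lmodType k) (I : eqType) (e : I -> V) : Prop :=
  forall (s : seq I) (c : I -> k), uniq s ->
    \sum_(i <- s) c i *: e i = 0 -> forall i, i \in s -> c i = 0.

Definition countable_dim (V : lmodType k) : Prop :=
  exists (I : countType) (e : I -> V), spanning e /\ lin_indep e.

Definition strength_le (V : lmodType k) (q : V -> k) (s : nat) : Prop :=
  exists (g h : 'I_s -> V -> k),
    (forall i, linear_form (g i)) /\ (forall i, linear_form (h i)) /\
    forall v : V, q v = \sum_(i < s) g i v * h i v.

Definition nondegenerate (V : lmodType k) (q : V -> k) : Prop :=
  forall s : nat, ~ strength_le q s.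

Definition embeds (W V : lmodType k) (q' : W -> k) (q : V -> k) : Prop :=
  exists phi : W -> V, klinear phi /\ forall w : W, q (phi w) = q' w.

Definition isogenous (V W : lmodType k) (q : V -> k) (q' : W -> k) : Prop :=
  embeds q q' /\ embeds q' q.

Definition ndc_quad_space (V : lmodType k) (q : V -> k) : Prop :=
  is_quadratic q /\ countable_dim V /\ nondegenerate q.

End QuadSpaces.

From Pilot Require Import Defs.
From HB Require Import structures.
From mathcomp Require Import all_boot all_order all_algebra.
From mathcomp Require Import ring zify.
From Stdlib Require Import IndefiniteDescription Classical.
Set Implicit Arguments. Unset Strict Implicit. Unset Printing Implicit Defensive.
Import GRing.Theory.
Local Open Scope ring_scope.

(* Over an algebraically closed field of characteristic not 2, a non-degenerate [q'] admits
   an infinite orthonormal sequence: if no unit vector were orthogonal to a finite orthonormal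
   family [l_1, ..., l_n], then [q'] would vanish on its orthogonal complement, and
   [q' v = sum_i (B(v, l_i) / 2)^2] would have strength [n].  Pairing the vectors two by two
   with a square root [i] of [-1] turns it into a sequence of hyperbolic pairs [(u_n, v_n)].
   Any quadratic space [(V, q)] of countable dimension embeds into such a sequence, by sending
   its [n]-th basis vector [e_n] to [u_n + sum_(m < n) B(e_n, e_m) v_m + q(e_n) v_n].  Hence any
   two non-degenerate spaces of countable dimension are isogenous.  The sum of the squares of
   the coefficients on [k[X]] is such a space: a decomposition into [s] products of linear
   forms has a nonzero common zero among the polynomials of degree [<= 2s], which lies in the
   radical of the polar form, whereas the monomials are orthogonal of norm [2]. *)

Section PolarForm.
Variables (k : fieldType) (V : lmodType k) (q : V -> k).
Hypothesis q_quad : is_quadratic q.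

Lemma quadratic0 : q 0 = 0.
Proof. by have := q_quad.1 0 0; rewrite scale0r expr0n mul0r. Qed.

Lemma polarC u v : polar q u v = polar q v u.
Proof. by rewrite /polar [u + v]addrC; ring. Qed.

Lemma polar0l v : polar q 0 v = 0.
Proof. by rewrite /polar add0r quadratic0 subr0 subrr. Qed.

Lemma polarDl u w v : polar q (u + w) v = polar q u v + polar q w v.
Proof. by rewrite -[u]scale1r q_quad.2 mul1r scale1r. Qed.

Lemma polarZl a u v : polar q (a *: u) v = a * polar q u v.
Proof. by rewrite -[a *: u]addr0 q_quad.2 polar0l addr0. Qed.

Lemma polarNl u v : polar q (- u) v = - polar q u v.
Proof. by rewrite -scaleN1r polarZl mulN1r. Qed.

Lemma polarBl u w v : polar q (u - w) v = polar q u v - polar q w v.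
Proof. by rewrite polarDl polarNl. Qed.

Lemma polarDr u w v : polar q v (u + w) = polar q v u + polar q v w.
Proof. by rewrite !(polarC v) polarDl. Qed.

Lemma polarZr a u v : polar q v (a *: u) = a * polar q v u.
Proof. by rewrite !(polarC v) polarZl. Qed.

Lemma quadraticD u v : q (u + v) = q u + q v + polar q u v.
Proof. by rewrite /polar; ring. Qed.

Lemma polarxx v : polar q v v = 2 * q v.
Proof.
rewrite /polar -{1 2}[v]scale1r -scalerDl q_quad.1.
by rewrite -[1 + 1]/(2 : k) expr2; ring.
Qed.

Lemma polar_suml (I : Type) (r : seq I) (c : I -> k) (x : I -> V) y :
  polar q (\sum_(i <- r) c i *: x i) y = \sum_(i <- r) c i * polar q (x i) y.
Proof.
elim: r => [|a r IH]; first by rewrite !big_nil polar0l.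
by rewrite !big_cons polarDl polarZl IH.
Qed.

Lemma polar_sumr (I : Type) (r : seq I) (c : I -> k) (x : I -> V) y :
  polar q y (\sum_(i <- r) c i *: x i) = \sum_(i <- r) c i * polar q y (x i).
Proof. by rewrite polarC polar_suml; apply: eq_bigr => i _; rewrite polarC. Qed.

Lemma quadratic_sum (I : Type) (r : seq I) (c : I -> k) (x : I -> V) :
  2 * q (\sum_(i <- r) c i *: x i) =
  \sum_(i <- r) c i * \sum_(j <- r) c j * polar q (x i) (x j).
Proof. by rewrite -polarxx polar_suml; apply: eq_bigr => i _; rewrite polar_sumr. Qed.

End PolarForm.

Section LinearForms.
Variables (k : fieldType) (V : lmodType k) (f : V -> k).
Hypothesis f_lin : linear_form f.

Lemma linear_form0 : f 0 = 0.
Proof.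
have := f_lin 1 0 0; rewrite scaler0 addr0 mul1r => /eqP.
by rewrite -subr_eq subrr eq_sym => /eqP.
Qed.

Lemma linear_formD u v : f (u + v) = f u + f v.
Proof. by have := f_lin 1 u v; rewrite scale1r mul1r. Qed.

Lemma linear_form_sum (I : Type) (r : seq I) (c : I -> k) (x : I -> V) :
  f (\sum_(i <- r) c i *: x i) = \sum_(i <- r) c i * f (x i).
Proof.
elim: r => [|a r IH]; first by rewrite !big_nil linear_form0.
by rewrite !big_cons f_lin IH.
Qed.

End LinearForms.

Lemma big_uniq_widen (R : nmodType) (I : eqType) (u w : seq I) (F : I -> R) :
  uniq u -> uniq w -> {subset u <= w} ->
  (forall i, i \in w -> i \notin u -> F i = 0) ->
  \sum_(i <- w) F i = \sum_(i <- u) F i.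
Proof.
move=> uu uw suw F0.
rewrite (bigID (mem u)) /= [X in _ + X]big1_seq ?addr0; last first.
  by move=> i /andP [iu iw]; apply: F0.
rewrite -big_filter; apply/perm_big/uniq_perm; rewrite ?filter_uniq // => i.
by rewrite mem_filter andb_idr //; apply: suw.
Qed.

Lemma sum_regroup (k : fieldType) (V : lmodType k) (I : eqType) (x : I -> V)
    (s u : seq I) (c : I -> k) :
  uniq u -> {subset s <= u} ->
  \sum_(j <- s) c j *: x j = \sum_(i <- u) (\sum_(j <- s | j == i) c j) *: x i.
Proof.
move=> uu su.
under [RHS]eq_bigr => i _ do rewrite scaler_suml big_mkcond /=.
rewrite exchange_big /=; apply: eq_big_seq => j js.
rewrite -big_mkcond (eq_bigl (pred1 j)) => [|i]; last by rewrite /= eq_sym.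
by rewrite -big_filter filter_pred1_uniq ?big_seq1 ?su.
Qed.

Lemma sum_ord_delta (R : pzSemiRingType) (r a : nat) (c : nat -> R) :
  \sum_(m < r) c m * (a == m)%:R = if (a < r)%N then c a else 0.
Proof.
case: ltnP => ar; last first.
  by apply: big1 => m _; rewrite gtn_eqF ?mulr0 // (leq_trans (ltn_ord m)).
rewrite (bigD1 (Ordinal ar)) //= eqxx mulr1 big1 ?addr0 // => m mNa.
by rewrite eq_sym (_ : (m == a :> nat) = false) ?mulr0 //; apply/negbTE.
Qed.

Section BasisExtension.
Variables (k : fieldType) (V W : lmodType k) (I : eqType) (e : I -> V).
Hypotheses (e_span : spanning e) (e_free : lin_indep e).

Lemma free_coef_eq (u : seq I) (a b : I -> k) : uniq u ->
  \sum_(i <- u) a i *: e i = \sum_(i <- u) b i *: e i -> {in u, a =1 b}.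
Proof.
move=> uu ab i iu; apply/eqP; rewrite -subr_eq0; apply/eqP.
apply: (@e_free u (fun j => a j - b j) uu _ i iu).
by under eq_bigr => j _ do rewrite scalerBl; rewrite sumrB ab subrr.
Qed.

Lemma spanning_repr v : exists p : seq I * (I -> k), v = \sum_(i <- p.1) p.2 i *: e i.
Proof. by have [s [c ->]] := e_span v; exists (s, c). Qed.

Definition basis_repr v := proj1_sig (constructive_indefinite_description _ (spanning_repr v)).

Definition support v := undup (basis_repr v).1.

(* [(basis_repr v).1] may repeat indices; [coord] adds up their coefficients. *)
Definition coord v i := \sum_(j <- (basis_repr v).1 | j == i) (basis_repr v).2 j.

Lemma coord_notin v i : i \notin support v -> coord v i = 0.
Proof.
rewrite mem_undup => iNv; rewrite /coord big1_seq // => j /andP [/eqP ji jv].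
by rewrite -ji jv in iNv.
Qed.

Lemma coord_expand v u : uniq u -> {subset support v <= u} ->
  v = \sum_(i <- u) coord v i *: e i.
Proof.
move=> uu sv; rewrite {1}(proj2_sig (constructive_indefinite_description _ (spanning_repr v))).
by apply: sum_regroup => // i iv; apply: sv; rewrite mem_undup.
Qed.

Lemma coordZD a u v i : coord (a *: u + v) i = a * coord u i + coord v i.
Proof.
set w := a *: u + v; pose U := undup (support u ++ support v ++ support w).
have uU : uniq U := undup_uniq _.
have [su sv sw] : [/\ {subset support u <= U}, {subset support v <= U}
                    & {subset support w <= U}].
  by split=> j jS; rewrite mem_undup !mem_cat jS ?orbT.
case: (boolP (i \in U)) => iU.
  apply: (@free_coef_eq U (coord w) (fun j => a * coord u j + coord v j) uU _ i iU).
  rewrite -(coord_expand uU sw).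
  rewrite /w {1}(coord_expand uU su) {1}(coord_expand uU sv) scaler_sumr -big_split.
  by apply: eq_bigr => j _; rewrite scalerDl scalerA.
have iNS S : {subset support S <= U} -> coord S i = 0.
  by move=> sS; apply: coord_notin; apply: contra iU; apply: sS.
by rewrite !iNS // mulr0 addr0.
Qed.

Variables (q : V -> k) (q' : W -> k) (t : I -> W).
Hypotheses (two_neq0 : (2 : k) != 0) (q_quad : is_quadratic q) (q'_quad : is_quadratic q').
Hypothesis t_polar : forall i j, polar q' (t i) (t j) = polar q (e i) (e j).

Definition basis_extension v := \sum_(i <- support v) coord v i *: t i.

Lemma basis_extension_expand v u : uniq u -> {subset support v <= u} ->
  basis_extension v = \sum_(i <- u) coord v i *: t i.
Proof.
move=> uu sv; symmetry; apply: big_uniq_widen => //; first exact: undup_uniq.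
by move=> i _ /coord_notin ->; rewrite scale0r.
Qed.

Lemma basis_extension_linear : klinear basis_extension.
Proof.
move=> a u v; set w := a *: u + v; pose U := undup (support u ++ support v ++ support w).
have uU : uniq U := undup_uniq _.
have [su sv sw] : [/\ {subset support u <= U}, {subset support v <= U}
                    & {subset support w <= U}].
  by split=> j jS; rewrite mem_undup !mem_cat jS ?orbT.
rewrite (basis_extension_expand uU su) (basis_extension_expand uU sv).
rewrite (basis_extension_expand uU sw) scaler_sumr -big_split.
by apply: eq_bigr => i _; rewrite coordZD scalerDl scalerA.
Qed.

Lemma quadratic_basis_extension v : q' (basis_extension v) = q v.
Proof.
have su : {subset support v <= support v} by [].
rewrite (basis_extension_expand (undup_uniq _) su).
rewrite [in RHS](coord_expand (undup_uniq _) su); apply: (mulfI two_neq0).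
rewrite !quadratic_sum //; apply: eq_bigr => i _; congr (_ * _).
by apply: eq_bigr => j _; rewrite t_polar.
Qed.

Lemma embeds_of_basis_images : embeds q q'.
Proof.
exists basis_extension.
by split; [exact: basis_extension_linear | exact: quadratic_basis_extension].
Qed.

End BasisExtension.

Section Orthonormal.
Variables (k : fieldType) (W : lmodType k) (q : W -> k).
Hypotheses (two_neq0 : (2 : k) != 0) (q_quad : is_quadratic q).

Definition orthonormal_seq (L : seq W) :=
  forall i j, (i < size L)%N -> (j < size L)%N -> polar q L`_i L`_j = (i == j)%:R * 2.

Definition orthogonal_to (L : seq W) w := forall j, (j < size L)%N -> polar q w L`_j = 0.

Lemma strength_le_of_isotropic_complement L : orthonormal_seq L ->
  (forall w, orthogonal_to L w -> q w = 0) -> strength_le q (size L).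
Proof.
move=> oL isoL; pose a (i : 'I_(size L)) v := polar q v L`_i / 2.
have a_lin i : linear_form (a i) by move=> c u v; rewrite /a q_quad.2 mulrDl mulrA.
have oLI (i j : 'I_(size L)) : polar q L`_i L`_j = (i == j)%:R * 2 by apply: oL.
have sum_a v (j : 'I_(size L)) :
    \sum_(i < size L) a i v * polar q L`_i L`_j = polar q v L`_j.
  rewrite (bigD1 j) //= oLI eqxx big1 => [|i /negbTE ij]; last by rewrite oLI ij mul0r mulr0.
  by rewrite addr0 mul1r divfK.
pose P v := v - \sum_(i < size L) a i v *: L`_i.
have PL v : orthogonal_to L (P v).
  by move=> j jL; rewrite polarBl // polar_suml // (sum_a v (Ordinal jL)) subrr.
exists a, a; split=> //; split=> // v.
have -> : q v = q (P v + \sum_(i < size L) a i v *: L`_i) by rewrite /P subrK.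
rewrite quadraticD // isoL // polar_sumr // [X in _ + X]big1 => [|i _]; last first.
  by rewrite (PL v i (ltn_ord i)) mulr0.
rewrite add0r addr0; apply: (mulfI two_neq0); rewrite quadratic_sum // mulr_sumr.
apply: eq_bigr => i _.
rewrite (eq_bigr (fun j => a j v * polar q L`_j L`_i)) => [|j _]; last by rewrite polarC.
by rewrite sum_a /a mulrCA [2 * _]mulrC divfK.
Qed.

Lemma orthonormal_rcons L w : orthonormal_seq L -> orthogonal_to L w -> q w = 1 ->
  orthonormal_seq (rcons L w).
Proof.
move=> oL wL qw i j; rewrite size_rcons !nth_rcons => iL jL.
case: (ltngtP i (size L)) => [{}iL|?|?]; case: (ltngtP j (size L)) => [{}jL|?|?];
  try lia; subst.
- exact: oL.
- by rewrite polarC wL // ltn_eqF // mul0r.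
- by rewrite wL // gtn_eqF // mul0r.
- by rewrite eqxx polarxx // qw mulr1 mul1r.
Qed.

End Orthonormal.

Lemma closed_field_sqrt (k : closedFieldType) (c : k) : exists r : k, r ^+ 2 = c.
Proof.
have /closed_rootP [r] : size ('X^2 - c%:P : {poly k}) != 1 by rewrite size_XnsubC.
by rewrite /root !hornerE subr_eq0 => /eqP r2; exists r.
Qed.

Section ClosedNondegenerate.
Variables (k : closedFieldType) (W : lmodType k) (q : W -> k).
Hypotheses (two_neq0 : (2 : k) != 0) (q_quad : is_quadratic q) (q_nd : Defs.nondegenerate q).

Lemma orthonormal_seq_ext L : orthonormal_seq q L ->
  exists2 w, orthogonal_to q L w & q w = 1.
Proof.
move=> oL; case: (classic (exists2 w, orthogonal_to q L w & q w != 0)) => [[w wL qw]|noW].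
  have [r r2] := closed_field_sqrt (q w)^-1.
  exists (r *: w); first by move=> j jL; rewrite polarZl // wL // mulr0.
  by rewrite q_quad.1 r2 mulVf.
case: (@q_nd (size L)); apply: strength_le_of_isotropic_complement => // w wL.
by case: (eqVneq (q w) 0) => // qw; case: noW; exists w.
Qed.

Lemma nondegenerate_orthonormal_family :
  exists w : nat -> W, forall a b, polar q (w a) (w b) = (a == b)%:R * 2.
Proof.
have next_ex L : exists w, orthonormal_seq q L -> orthogonal_to q L w /\ q w = 1.
  case: (classic (orthonormal_seq q L)) => [oL|]; last by exists 0.
  by have [w wL qw] := orthonormal_seq_ext oL; exists w.
pose next L := proj1_sig (constructive_indefinite_description _ (next_ex L)).
have nextP L := proj2_sig (constructive_indefinite_description _ (next_ex L)).
pose build n := iter n (fun L => rcons L (next L)) [::].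
have buildS n : build n.+1 = rcons (build n) (next (build n)) by [].
have size_build n : size (build n) = n by elim: n => // n IH; rewrite buildS size_rcons IH.
have build_on n : orthonormal_seq q (build n).
  elim: n => [i j //|n IH]; rewrite buildS.
  by have [wL qw] := nextP _ IH; apply: orthonormal_rcons.
pose w m := next (build m).
have nth_build n m : (m < n)%N -> (build n)`_m = w m.
  elim: n => // n IH; rewrite ltnS leq_eqVlt buildS nth_rcons size_build.
  by case/orP => [/eqP ->|mn]; rewrite ?ltnn ?eqxx // mn IH.
exists w => a b; have ltab c : (c <= maxn a b)%N -> (c < (maxn a b).+1)%N by [].
rewrite -(nth_build _ _ (ltab _ (leq_maxl a b))) -(nth_build _ _ (ltab _ (leq_maxr a b))).
by apply: build_on; rewrite size_build ?ltab ?leq_maxl ?leq_maxr.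
Qed.

End ClosedNondegenerate.

Section Hyperbolic.
Variables (k : fieldType) (W : lmodType k) (q : W -> k).
Hypotheses (two_neq0 : (2 : k) != 0) (q_quad : is_quadratic q).

Definition hyperbolic_family (u v : nat -> W) := forall m n,
  [/\ polar q (u m) (u n) = 0, polar q (v m) (v n) = 0 & polar q (u m) (v n) = (m == n)%:R].

(* With [i ^+ 2 = -1], the vectors [w (2m) + i w (2m+1)] and [(w (2m) - i w (2m+1)) / 4]
   form a hyperbolic pair. *)
Lemma hyperbolic_of_orthonormal (i : k) (w : nat -> W) : i ^+ 2 = -1 ->
  (forall a b, polar q (w a) (w b) = (a == b)%:R * 2) ->
  exists u v, hyperbolic_family u v.
Proof.
move=> i2 w_on; have ii : i * i = -1 by rewrite -expr2.
pose pair a b m := a *: w (2 * m)%N + b *: w (2 * m).+1.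
have polar_pair a b c d m n :
    polar q (pair a b m) (pair c d n) = (m == n)%:R * (2 * (a * c + b * d)).
  have [e1 e2 e3 e4] : [/\ (2 * m == 2 * n)%N = (m == n), (2 * m == (2 * n).+1)%N = false,
      ((2 * m).+1 == 2 * n)%N = false & ((2 * m).+1 == (2 * n).+1)%N = (m == n)].
    by split; apply/eqP/eqP; lia.
  rewrite !polarDl // !polarDr // !polarZl // !polarZr // !w_on e1 e2 e3 e4 /=; ring.
pose c : k := 4^-1.
have four_neq0 : (4 : k) != 0.
  by rewrite (_ : 4 = 2 * 2 :> k) ?mulf_neq0 // -natrM.
exists (pair 1 i), (pair c (- (c * i))) => m n; rewrite !polar_pair; split.
- by rewrite mul1r ii subrr !mulr0.
- by rewrite mulrNN mulrACA ii mulrN1 subrr !mulr0.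
- have -> : 2 * (1 * c + i * - (c * i)) = 2 * c * (1 - i * i) by ring.
  rewrite ii opprK (_ : 2 * c * (1 + 1) = 4 / 4); last by rewrite /c; ring.
  by rewrite divff ?mulr1.
Qed.

End Hyperbolic.

Section HyperbolicEmbedding.
Variables (k : fieldType) (V W : lmodType k) (q : V -> k) (q' : W -> k).
Hypotheses (two_neq0 : (2 : k) != 0) (q_quad : is_quadratic q) (q'_quad : is_quadratic q').
Variables (u v : nat -> W).
Hypothesis uv_hyp : hyperbolic_family q' u v.

Lemma polar_u_sum_v a r (c : nat -> k) :
  polar q' (u a) (\sum_(m < r) c m *: v m) = if (a < r)%N then c a else 0.
Proof.
rewrite polar_sumr // -sum_ord_delta; apply: eq_bigr => m _.
by have [_ _ ->] := uv_hyp a m.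
Qed.

Lemma polar_v_sum_v a r (c : nat -> k) : polar q' (v a) (\sum_(m < r) c m *: v m) = 0.
Proof.
by rewrite polar_sumr // big1 // => m _; have [_ -> _] := uv_hyp a m; rewrite mulr0.
Qed.

Variables (I : countType) (e : I -> V).

Definition gram_coef i m := if @unpickle I m is Some j then polar q (e i) (e j) else 0.

(* For [pickle i < pickle j], the images of [e i] and [e j] pair through the coefficient of
   [v (pickle i)] in the image of [e j], namely [polar q (e j) (e i)]; on the diagonal the last
   summand contributes [2 * q (e i)]. *)
Definition hyperbolic_image i :=
  u (pickle i) + \sum_(m < pickle i) gram_coef i m *: v m + q (e i) *: v (pickle i).

Lemma polar_hyperbolic_image i j :
  polar q' (hyperbolic_image i) (hyperbolic_image j) = polar q (e i) (e j).
Proof.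
have sum_v r1 r2 (c1 c2 : nat -> k) :
    polar q' (\sum_(m < r1) c1 m *: v m) (\sum_(m < r2) c2 m *: v m) = 0.
  by rewrite polar_suml // big1 // => m _; rewrite polar_v_sum_v mulr0.
have [uu vv uv] := uv_hyp (pickle i) (pickle j).
have [_ _ vu] := uv_hyp (pickle j) (pickle i).
rewrite /hyperbolic_image !polarDl // !polarDr // !polarZl // !polarZr //.
rewrite uu vv uv sum_v polar_u_sum_v polar_v_sum_v (polarC q' (v _)) vu.
rewrite (polarC q' _ (v _)) polar_v_sum_v (polarC q' _ (u _)) polar_u_sum_v.
rewrite !mulr0 !addr0 !add0r.
case: (eqVneq i j) => [<-|ij].
  by rewrite ltnn eqxx !mulr1 add0r addr0 polarxx // mulr_natl mulr2n.
case: (ltngtP (pickle i) (pickle j)) => [_|_|/(pcan_inj pickleK) eq_ij].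
- by rewrite /gram_coef pickleK /= !mulr0 !addr0 polarC.
- by rewrite /gram_coef pickleK /= !mulr0 !addr0 add0r.
- by rewrite eq_ij eqxx in ij.
Qed.

Lemma embeds_into_hyperbolic : spanning e -> lin_indep e -> embeds q q'.
Proof.
move=> e_span e_free.
apply: (embeds_of_basis_images e_span e_free two_neq0 q_quad q'_quad).
exact: polar_hyperbolic_image.
Qed.

End HyperbolicEmbedding.

Lemma embeds_into_nondegenerate (k : closedFieldType) (V W : lmodType k)
    (q : V -> k) (q' : W -> k) :
  (2 : k) != 0 -> is_quadratic q -> countable_dim V ->
  is_quadratic q' -> Defs.nondegenerate q' -> embeds q q'.
Proof.
move=> two_neq0 q_quad [I [e [e_span e_free]]] q'_quad q'_nd.
have [w w_on] := nondegenerate_orthonormal_family two_neq0 q'_quad q'_nd.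
have [i i2] := closed_field_sqrt (-1 : k).
have [u [v uv]] := hyperbolic_of_orthonormal two_neq0 q'_quad i2 w_on.
exact: (embeds_into_hyperbolic two_neq0 q_quad q'_quad uv e_span e_free).
Qed.

Lemma polar_eq0_at_common_zero (k : fieldType) (V : lmodType k) (q : V -> k) s
    (g h : 'I_s -> V -> k) :
  (forall i, linear_form (g i)) -> (forall i, linear_form (h i)) ->
  (forall v, q v = \sum_(i < s) g i v * h i v) ->
  forall u, (forall i, g i u = 0) -> (forall i, h i u = 0) ->
  forall v, polar q u v = 0.
Proof.
move=> g_lin h_lin qE u gu hu v.
have quv : q (u + v) = q v.
  by rewrite !qE; apply: eq_bigr => i _; rewrite !linear_formD // gu hu !add0r.
have qu : q u = 0 by rewrite qE big1 // => i _; rewrite gu mul0r.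
by rewrite /polar quv qu subr0 subrr.
Qed.

Lemma linear_forms_common_zero (k : fieldType) (V : lmodType k) m N
    (f : 'I_m -> V -> k) (b : 'I_N -> V) :
  (m < N)%N -> (forall i, linear_form (f i)) ->
  exists2 x : 'I_N -> k, exists j, x j != 0 & forall i, f i (\sum_j x j *: b j) = 0.
Proof.
move=> ltmN f_lin; pose A := \matrix_(j < N, i < m) f i (b j).
have /rowV0Pn [x /sub_kermxP xA x_neq0] : kermx A != 0.
  by rewrite kermx_eq0 /row_free neq_ltn (leq_ltn_trans (rank_leq_col A)).
exists (x 0).
  case: (pickP (fun j => x 0 j != 0)) => [j xj|x0]; first by exists j.
  by case/eqP: x_neq0; apply/rowP => j; move/negbFE/eqP: (x0 j); rewrite mxE.
move=> i; rewrite linear_form_sum //.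
have := congr1 (fun M : 'M_(1, m) => M 0 i) xA; rewrite !mxE => xAi.
by rewrite -[RHS]xAi; apply: eq_bigr => j _; rewrite mxE.
Qed.

Section SumOfSquares.
Variable k : fieldType.

Definition sumsq (p : {poly k}) : k := \sum_(i < size p) p`_i ^+ 2.

Lemma sumsq_widen (p : {poly k}) n : (size p <= n)%N -> sumsq p = \sum_(i < n) p`_i ^+ 2.
Proof.
move=> pn; rewrite /sumsq -!(big_mkord xpredT (fun i => p`_i ^+ 2)).
rewrite (big_cat_nat (leq0n _) pn) /= [X in _ + X]big1_seq ?addr0 // => i /=.
by rewrite mem_index_iota => /andP [pi _]; rewrite nth_default // expr0n.
Qed.

Lemma polar_sumsq (x y : {poly k}) n : (size x <= n)%N -> (size y <= n)%N ->
  polar sumsq x y = \sum_(i < n) 2 * x`_i * y`_i.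
Proof.
move=> xn yn; have xyn : (size (x + y)%R <= n)%N.
  by rewrite (leq_trans (size_polyD _ _)) // geq_max xn yn.
rewrite /polar !(sumsq_widen xn, sumsq_widen yn, sumsq_widen xyn) -!sumrB.
by apply: eq_bigr => i _; rewrite coefD; ring.
Qed.

Lemma sumsq_quadratic : is_quadratic sumsq.
Proof.
split=> [a v|a u w v].
  rewrite (sumsq_widen (size_scale_leq a v)) /sumsq mulr_sumr.
  by apply: eq_bigr => i _; rewrite coefZ exprMn.
pose N := (size u + size w + size v)%N.
have [uN wN vN] : [/\ size u <= N, size w <= N & size v <= N]%N by rewrite /N; split; lia.
have auwN : (size (a *: u + w)%R <= N)%N.
  by rewrite (leq_trans (size_polyD _ _)) // geq_max wN (leq_trans (size_scale_leq _ _)).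
rewrite !(polar_sumsq auwN vN, polar_sumsq uN vN, polar_sumsq wN vN) mulr_sumr -big_split /=.
by apply: eq_bigr => i _; rewrite coefD coefZ; ring.
Qed.

Lemma polar_sumsq_Xn a b : polar sumsq 'X^a 'X^b = 2 * (a == b)%:R.
Proof.
have [aN bN] : [/\ size ('X^a : {poly k}) <= (maxn a b).+1
                 & size ('X^b : {poly k}) <= (maxn a b).+1]%N.
  by rewrite !size_polyXn; split; lia.
rewrite (polar_sumsq aN bN).
under eq_bigr => i _ do rewrite !coefXn [(nat_of_ord i == b)]eq_sym.
by rewrite (sum_ord_delta _ _ (fun m => 2 * (m == a)%:R)) ltnS leq_maxr eq_sym.
Qed.

Lemma spanning_Xn : spanning (fun i : nat => 'X^i : {poly k}).
Proof.
move=> p; exists (iota 0 (size p)), (fun i => p`_i).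
rewrite -{1}[p]coefK poly_def -(big_mkord xpredT (fun i => p`_i *: 'X^i)).
by rewrite /index_iota subn0.
Qed.

Lemma lin_indep_Xn : lin_indep (fun i : nat => 'X^i : {poly k}).
Proof.
move=> s c s_uniq sum0 i si.
have := congr1 (fun p : {poly k} => p`_i) sum0; rewrite coef0 coef_sumMXn => <-.
by rewrite -big_filter (eq_filter (a2 := pred1 i)) ?filter_pred1_uniq ?big_seq1.
Qed.

Lemma sumsq_nondegenerate : (2 : k) != 0 -> Defs.nondegenerate sumsq.
Proof.
move=> two_neq0 s [g [h [g_lin [h_lin sumsqE]]]].
pose f i := match @split s s i with inl j => g j | inr j => h j end.
have f_lin i : linear_form (f i) by rewrite /f; case: split.
have [x [j xj] fx] := linear_forms_common_zero
  (fun j : 'I_(s + s).+1 => 'X^j : {poly k}) (ltnSn _) f_lin.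
have : polar sumsq (\sum_j x j *: 'X^j) 'X^j = 0.
  apply: (polar_eq0_at_common_zero g_lin h_lin sumsqE) => i.
  - by have := fx (unsplit (inl i)); rewrite /f unsplitK.
  - by have := fx (unsplit (inr i)); rewrite /f unsplitK.
rewrite polar_suml; last exact: sumsq_quadratic.
rewrite (bigD1 j) //= polar_sumsq_Xn eqxx big1 => [|l /negbTE lj]; last first.
  by rewrite polar_sumsq_Xn (_ : (l == j :> nat) = false) ?mulr0.
by rewrite addr0 mulr1 => /eqP; rewrite mulf_eq0 (negbTE xj) (negbTE two_neq0).
Qed.

Lemma sumsq_ndc_quad_space : (2 : k) != 0 -> ndc_quad_space sumsq.
Proof.
move=> two_neq0; split; first exact: sumsq_quadratic.
split; last exact: sumsq_nondegenerate.
by exists nat, (fun i => 'X^i : {poly k}); split; [exact: spanning_Xn | exact: lin_indep_Xn].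
Qed.

End SumOfSquares.

Theorem corollary2p5 (k : closedFieldType) (hk : (2%N \notin [pchar k])) :
  (exists (V : lmodType k) (q : V -> k), ndc_quad_space q) /\
  (forall (V W : lmodType k) (q : V -> k) (q' : W -> k),
      ndc_quad_space q -> ndc_quad_space q' -> isogenous q q').
Proof.
have two_neq0 : (2 : k) != 0 by move: hk; rewrite inE.
split; first by exists {poly k}, (@sumsq k); apply: sumsq_ndc_quad_space.
move=> V W q q' [q_quad [V_dim q_nd]] [q'_quad [W_dim q'_nd]].
by split; apply: embeds_into_nondegenerate.
Qed.
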